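(* Assume the reduced model family is $\sigma$-admissible and let $u^*(w)$ be the estimator obtained by surrogate model selection using the residual surrogate $\mathcal S(v,\mathcal M)=\min_{y\in Y}\mathcal R(v,y)$. For $y\in Y$ let $u=u(y)$ and $w=P_Wu$, and let $y^*\in\operatorname{argmin}_{y'\in Y}\mathcal R(u^*(w),y')$. Then $$\|u(y)-u(y^* )\|\le(1+\kappa)\delta_{\kappa\sigma},\qquad\kappa=R/r.$$ If in addition $\delta_0=0$ and $\mu(\mathcal M,W):=\frac12\sup_{\sigma'>0}\delta_{\sigma'}/\sigma'<\infty$, then $$\|u(y)-u(y^* )\|\le(2\mu(\mathcal M,W)+1)\kappa\sigma.$$
   Context: Let $V$ and $Z$ be real Hilbert spaces, with $\|\cdot\|$ the norm of $V$ and $Z'$ the dual of $Z$. Let $Y\subset\mathbb R^d$ be compact. For $y\in Y$ let $A(y):V\to Z'$ be a bounded linear isomorphism and $f(y)\in Z'$, with $y\mapsto A(y)$ and $y\mapsto f(y)$ continuous. Assume there are constants $0<r\le R$ such that $\|A(y)\|_{V\to Z'}\le R$ and $\|A(y)^{-1}\|_{Z'\to V}\le r^{-1}$ for all $y\in Y$. Let $u(y)=A(y)^{-1}f(y)$ and $\mathcal M=\{u(y):y\in Y\}$. Define the residual $\mathcal R(v,y)=\|A(y)v-f(y)\|_{Z'}$, so that $r\|v-u(y)\|\le\mathcal R(v,y)\le R\|v-u(y)\|$. Let $W\subset V$ be a subspace of finite dimension $m$, let $P_W$ be the orthogonal projection onto $W$, and let $W^\perp$ be its orthogonal complement. For $w\in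 W$ put $V_w=w+W^\perp$. For $\sigma\ge0$ define $\mathcal M_\sigma=\{v:\operatorname{dist}(v,\mathcal M)\le\sigma\}$ and $\delta_\sigma=\sup\{\|u-v\|:u,v\in\mathcal M_\sigma,u-v\in W^\perp\}$. For a finite-dimensional subspace $E$ let $\mu(E,W)=\sup_{v\in E\setminus\{0\}}\|v\|/\|P_Wv\|$, with $\mu(\{0\},W)=1$. A reduced model family consists of: - sets $\mathcal M_1,\dots,\mathcal M_K$ with $\mathcal M=\bigcup_k\mathcal M_k$; - affine spaces $V_k=\bar u_k+\bar V_k$ with $\dim\bar V_k=n_k\le m$; - numbers $\varepsilon_k\ge\sup_{u\in\mathcal M_k}\operatorname{dist}(u,V_k)$; - constants $\mu_k=\mu(\bar V_k,W)<\infty$. The family is $\sigma$-admissible if $\mu_k\varepsilon_k\le\sigma$ for all $k$. PBDW estimators: $u_k^*(w)=\operatorname{argmin}\{\operatorname{dist}(v,V_k):v\in V_w\}$. Surrogate model selection picks $k^*(w)$ as a minimizer of $k\mapsto\mathcal S(u_k^*(w),\mathcal M)$ and sets $u^*(w)=u^*_{k^*(w)}(w)$. *)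

From HB Require Import structures.
From mathcomp Require Import all_boot all_order all_algebra.
From mathcomp Require Import all_classical all_reals all_analysis.
Set Implicit Arguments. Unset Strict Implicit. Unset Printing Implicit Defensive.
Import Order.TTheory GRing.Theory Num.Theory.
Import numFieldNormedType.Exports.
Local Open Scope classical_set_scope.
Local Open Scope ring_scope.

Section Defs.
Context {R : realType}.

(* ip is a real inner product inducing the norm of V (|v|^2 = <v,v>);
   together with completeness of V this makes V a real Hilbert space. *)
Definition inner_product (V : normedModType R) (ip : V -> V -> R) : Prop :=
  [/\ forall u v, ip u v = ip v u,
      forall (a : R) u v w, ip (a *: u + v) w = a * ip u w + ip v w &
      forall v, `|v| ^+ 2 = ip v v].

Section Vsp.
Variable V : normedModType R.

Definition span_of (n : nat) (b : 'I_n -> V) : set V :=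
  [set x | exists c : 'I_n -> R, x = \sum_(i < n) c i *: b i].

Definition lin_indep (n : nat) (b : 'I_n -> V) : Prop :=
  forall c : 'I_n -> R, \sum_(i < n) c i *: b i = 0 -> forall i, c i = 0.

Definition subspace_of_dim (E : set V) (n : nat) : Prop :=
  exists b : 'I_n -> V, lin_indep b /\ E = span_of b.

Definition orth (ip : V -> V -> R) (E : set V) : set V :=
  [set v | forall w, E w -> ip v w = 0].

Definition affine (a : V) (E : set V) : set V := [set a + x | x in E].

Definition dist (v : V) (S : set V) : R := inf [set `|v - x| | x in S].

Definition Msig (M : set V) (s : R) : set V := [set v | dist v M <= s].

Definition delta (ip : V -> V -> R) (W M : set V) (s : R) : \bar R :=
  ereal_sup [set x | exists u v, [/\ Msig M s u, Msig M s v,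
                       orth ip W (u - v) & x = (`|u - v|)%:E]].

(* mu(E, W) where P is the orthogonal projection onto W; +oo if some
   nonzero v in E has P v = 0; mu({0},W) = 1 *)
Definition muEW (P : V -> V) (E : set V) : \bar R :=
  if `[< E `<=` [set 0] >] then 1%E
  else ereal_sup [set (if P v == 0 then +oo%E else (`|v| / `|P v|)%:E)
                  | v in [set v | E v /\ v != 0]].

Definition muMW (ip : V -> V -> R) (W M : set V) : \bar R :=
  let half : R := (2 : R)^-1 in
  (half%:E * ereal_sup [set x | exists s : R, (0 < s)%R /\ x = delta ip W M s * (s^-1)%R%:E])%E.
End Vsp.

Section Model.
Variables (V Z : normedModType R) (d : nat).

Definition resid (A : 'rV[R]_d -> V -> Z) (f : 'rV[R]_d -> Z) (v : V) (y : 'rV[R]_d) : R :=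
  `|A y v - f y|.

Definition surrogate (Y : set 'rV[R]_d) (A : 'rV[R]_d -> V -> Z) (f : 'rV[R]_d -> Z) (v : V) : R :=
  inf [set resid A f v y | y in Y].

Definition opnorm_continuous_on (Y : set 'rV[R]_d) (A : 'rV[R]_d -> V -> Z) : Prop :=
  forall y, Y y -> forall e : R, 0 < e ->
    \forall y' \near y, Y y' -> forall v, `|A y' v - A y v| <= e * `|v|.

Definition manifold (Y : set 'rV[R]_d) (Ainv : 'rV[R]_d -> Z -> V) (f : 'rV[R]_d -> Z) : set V :=
  [set Ainv y (f y) | y in Y].
End Model.

Definition pbdw_estimator {V : normedModType R} (ip : V -> V -> R) (W : set V)
    (Vk : set V) (ustar : V -> V) : Prop :=
  forall w, W w -> affine w (orth ip W) (ustar w) /\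
    forall v, affine w (orth ip W) v -> dist (ustar w) Vk <= dist v Vk.
End Defs.

(* Let u = u(y), w = P_W u, and let k be an index with u in M_k.  The proof
   has three independent ingredients, developed in this order.
   1. Hilbert-space geometry from the abstract inner product: bilinearity,
      Cauchy-Schwarz, orthogonal projection onto a finite span and best
      approximation from a finite-dimensional affine space.
   2. The PBDW error bound |u - u_k(w)| <= mu_k eps_k <= sigma for the PBDW
      estimator u_k(w).  Minimality of u_k(w) forces the gap between u_k(w)
      and its best approximation in V_k to lie in W; decomposing every vector
      along W + W^perp then reduces the bound to an inequality between reals.
   3. Residual bounds r |v - u(y)| <= R(v,y) <= R |v - u(y)|: as the selected
      index kstar and parameter ystar minimize the surrogate resp. the
      residual, the selected estimate ustar satisfies |ustar - u(ystar)| <=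
      kappa sigma and |ustar - u(ystar)| <= kappa |u - ustar|.
   Since u - ustar is orthogonal to W and u, ustar lie in M_(kappa sigma),
   |u - ustar| <= delta_(kappa sigma); the triangle inequality through ustar
   yields both statements of the theorem. *)
From HB Require Import structures.
From mathcomp Require Import all_boot all_order all_algebra.
From mathcomp Require Import all_classical all_reals all_analysis.
From mathcomp Require Import lra zify.
Import Order.TTheory GRing.Theory Num.Theory.
Import numFieldNormedType.Exports.
Local Open Scope classical_set_scope.
Local Open Scope ring_scope.
Set Implicit Arguments.
Unset Strict Implicit.

Section Span.
Variables (R : realType) (V : normedModType R) (n : nat) (b : 'I_n -> V).

Lemma span0 : span_of b 0.
Proof. by exists (fun=> 0); rewrite big1 // => i _; rewrite scale0r. Qed.
Lemma spanD x y : span_of b x -> span_of b y -> span_of b (x + y).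
Proof.
move=> [c ->] [e ->]; exists (fun i => c i + e i).
by rewrite -big_split /=; apply: eq_bigr => i _; rewrite scalerDl.
Qed.
Lemma spanZ a x : span_of b x -> span_of b (a *: x).
Proof.
move=> [c ->]; exists (fun i => a * c i).
by rewrite scaler_sumr; apply: eq_bigr => i _; rewrite scalerA.
Qed.
Lemma spanB x y : span_of b x -> span_of b y -> span_of b (x - y).
Proof. by move=> hx hy; apply: spanD => //; rewrite -scaleN1r; apply: spanZ. Qed.
Lemma span_gen i : span_of b (b i).
Proof.
exists (fun j => if j == i then 1 else 0).
rewrite (bigD1 i) //= eqxx scale1r big1 ?addr0 // => j /negbTE ->.
by rewrite scale0r.
Qed.
Lemma span_sum m (F : 'I_m -> V) : (forall i, span_of b (F i)) ->
  span_of b (\sum_(i < m) F i).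
Proof. by move=> h; elim/big_rec: _ => [|i x _]; [exact: span0|exact: spanD]. Qed.
End Span.
Arguments span_gen {R V n} b i.

Section Distance.
Variables (R : realType) (V : normedModType R).

Lemma dist_le (v x : V) (S : set V) : S x -> dist v S <= `|v - x|.
Proof.
move=> Sx; apply: ge_inf; last by exists x.
by exists 0 => _ [y _ <-]; apply: normr_ge0.
Qed.

Lemma dist_ge (v : V) (S : set V) c : S !=set0 ->
  (forall x, S x -> c <= `|v - x|) -> c <= dist v S.
Proof.
move=> [x Sx] h; apply: lb_le_inf; first by exists `|v - x|, x.
by move=> _ [y Sy <-]; apply: h.
Qed.

Lemma dist_ge0 (v : V) (S : set V) : S !=set0 -> 0 <= dist v S.
Proof. by move=> h; apply: dist_ge => // x _; apply: normr_ge0. Qed.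
End Distance.

(* The real inequality behind the PBDW bound.  In the application a, b are
   the norms of the W- and W^perp-components of an approximation error f,
   p, q those of a correction h, and the left-hand side is the squared error.
   The hypotheses give p <= a and p^2 <= (mu^2 - 1) b^2, whose weighted sum
   mu^2 p^2 + p^2 <= mu^2 a^2 + (mu^2 - 1) b^2 is the claim. *)
Lemma pbdw_real_ineq (R : realFieldType) (a b p q mu : R) :
  0 <= a -> 0 <= b -> 0 <= p -> 0 <= q -> 1 <= mu ->
  p ^+ 2 <= a * p -> p ^+ 2 <= b * q -> p ^+ 2 + q ^+ 2 <= (mu * p) ^+ 2 ->
  b ^+ 2 + 2 * p ^+ 2 + q ^+ 2 <= mu ^+ 2 * (a ^+ 2 + b ^+ 2).
Proof.
move=> a0 b0 p0 q0 mu1 pa pb pq.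
have q2 : q ^+ 2 <= (mu ^+ 2 - 1) * p ^+ 2 by rewrite exprMn in pq; lra.
have m21 : 0 <= mu ^+ 2 - 1 by nra.
have pa2 : p ^+ 2 <= a ^+ 2.
  have [->|pn0] := eqVneq p 0; first by rewrite expr0n /=; nra.
  have pg : 0 < p by rewrite lt0r pn0.
  have : p <= a by nra.
  nra.
have pb2 : p ^+ 2 <= (mu ^+ 2 - 1) * b ^+ 2.
  have [->|pn0] := eqVneq p 0; first by rewrite expr0n /= mulr_ge0 ?sqr_ge0.
  have p2 : 0 < p ^+ 2 by rewrite exprn_gt0 // lt0r pn0.
  have : p ^+ 2 * p ^+ 2 <= b ^+ 2 * ((mu ^+ 2 - 1) * p ^+ 2).
    apply: le_trans (_ : b ^+ 2 * q ^+ 2 <= _); first nra.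
    by apply: ler_wpM2l; [exact: sqr_ge0|exact: q2].
  nra.
nra.
Qed.

Section Hilbert.
Variables (R : realType) (V : normedModType R) (ip : V -> V -> R).
Hypothesis hip : inner_product ip.

Lemma ipC u v : ip u v = ip v u. Proof. by case: hip. Qed.
Lemma ipL a u v w : ip (a *: u + v) w = a * ip u w + ip v w.
Proof. by case: hip. Qed.
Lemma ipN v : `|v| ^+ 2 = ip v v. Proof. by case: hip. Qed.

Lemma ipDl u v w : ip (u + v) w = ip u w + ip v w.
Proof. by have := ipL 1 u v w; rewrite scale1r mul1r. Qed.
Lemma ip0l w : ip 0 w = 0.
Proof. by have := ipDl 0 0 w; rewrite addr0; lra. Qed.
Lemma ipZl a u w : ip (a *: u) w = a * ip u w.
Proof. by rewrite -[a *: u]addr0 ipL ip0l addr0. Qed.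
Lemma ipBl u v w : ip (u - v) w = ip u w - ip v w.
Proof. by rewrite ipDl -scaleN1r ipZl mulN1r. Qed.
Lemma ipDr u v w : ip w (u + v) = ip w u + ip w v.
Proof. by rewrite ipC ipDl ![ip _ w]ipC. Qed.
Lemma ipZr a u w : ip w (a *: u) = a * ip w u.
Proof. by rewrite ipC ipZl ipC. Qed.
Lemma ip0r w : ip w 0 = 0.
Proof. by rewrite ipC ip0l. Qed.
Lemma ipBr u v w : ip w (u - v) = ip w u - ip w v.
Proof. by rewrite ipC ipBl ![ip _ w]ipC. Qed.
Lemma ipNr u w : ip w (- u) = - ip w u.
Proof. by rewrite -[- u]add0r ipBr ip0r add0r. Qed.
Lemma ip_sumr n (F : 'I_n -> V) w : ip w (\sum_(i < n) F i) = \sum_(i < n) ip w (F i).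
Proof. by elim/big_rec2: _ => [|i x y _ <-]; rewrite ?ip0r ?ipDr. Qed.

Lemma normD2 u v : `|u + v| ^+ 2 = `|u| ^+ 2 + 2 * ip u v + `|v| ^+ 2.
Proof. by rewrite !ipN ipDl !ipDr (ipC v u); lra. Qed.

Lemma pyth u v : ip u v = 0 -> `|u + v| ^+ 2 = `|u| ^+ 2 + `|v| ^+ 2.
Proof. by move=> h; rewrite normD2 h mulr0 addr0. Qed.

Lemma ip_self0 x : ip x x = 0 -> x = 0.
Proof. by rewrite -ipN => /eqP; rewrite sqrf_eq0 normr_eq0 => /eqP. Qed.

(* Cauchy-Schwarz, from the positivity of |<v,v> u - <u,v> v|^2 *)
Lemma ipCS u v : ip u v <= `|u| * `|v|.
Proof.
have [->|vn0] := eqVneq v 0; first by rewrite ip0r normr0 mulr0.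
have v2 : 0 < `|v| ^+ 2 by rewrite exprn_gt0 // normr_gt0.
set c := ip u v.
have expand := ipN ((`|v| ^+ 2) *: u - c *: v).
rewrite ipBl !ipBr !ipZl !ipZr -!ipN (ipC v u) -/c in expand.
have sq : c ^+ 2 <= (`|u| * `|v|) ^+ 2.
  have := sqr_ge0 `|(`|v| ^+ 2) *: u - c *: v|; rewrite expand exprMn; nra.
have : 0 <= `|u| * `|v| by rewrite mulr_ge0.
by move: sq; set n := `|u| * `|v|; nra.
Qed.

Lemma orthD (E : set V) a b : orth ip E a -> orth ip E b -> orth ip E (a + b).
Proof. by move=> ha hb w Ew; rewrite ipDl ha // hb // addr0. Qed.
Lemma orthB (E : set V) a b : orth ip E a -> orth ip E b -> orth ip E (a - b).
Proof. by move=> ha hb w Ew; rewrite ipBl ha // hb // subr0. Qed.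

Lemma orth_span n (b : 'I_n -> V) x :
  (forall i, ip x (b i) = 0) -> orth ip (span_of b) x.
Proof.
move=> h z [c ->]; rewrite ip_sumr big1 // => i _.
by rewrite ipZr h mulr0.
Qed.

(* Orthogonal projection onto a finite span exists; induction on the
   number of generators, as in Gram-Schmidt. *)
Lemma proj_ex n (b : 'I_n -> V) v :
  exists p, span_of b p /\ orth ip (span_of b) (v - p).
Proof.
elim: n b v => [|n IH] b v.
  exists 0; split; first exact: span0.
  by apply: orth_span => -[].
set b' := fun i : 'I_n => b (widen_ord (leqnSn n) i).
have sub x : span_of b' x -> span_of b x.
  by move=> [c ->]; apply: span_sum => i; apply: spanZ; apply: span_gen.
have gens (i : 'I_n.+1) : (exists j, i = widen_ord (leqnSn n) j) \/ i = ord_max.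
  have [lt|ge] := ltnP i n; first by left; exists (Ordinal lt); apply: val_inj.
  by right; apply: val_inj => /=; have := ltn_ord i; lia.
(* q: the component of the new generator orthogonal to the old span *)
have [pl [hpl opl]] := IH b' (b ord_max).
set q := b ord_max - pl.
have bmax : b ord_max = q + pl by rewrite /q subrK.
have [p' [hp' op']] := IH b' v.
have [q0|qn0] := eqVneq (ip q q) 0.
  exists p'; split; first exact: sub.
  apply: orth_span => i; case: (gens i) => [[j ->]|->].
    by apply: op'; apply: span_gen.
  by rewrite bmax (ip_self0 q0) add0r (op' _ hpl).
set a := ip v q / ip q q.
have qo x : span_of b' x -> ip q x = 0 by apply: opl.
exists (p' + a *: q); split.
  by apply: spanD; [exact: sub|apply: spanZ; apply: spanB; [exact: span_gen|exact: sub]].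
have vq : ip (v - (p' + a *: q)) q = 0.
  rewrite opprD addrA ipBl ipZl ipBl (ipC p' q) (qo _ hp') subr0.
  by rewrite /a mulfVK // subrr.
apply: orth_span => i; case: (gens i) => [[j ->]|->].
  rewrite opprD addrA ipBl ipZl (op' _ (span_gen b' j)).
  by rewrite (qo _ (span_gen b' j)) mulr0 subrr.
rewrite bmax ipDr vq add0r opprD addrA ipBl ipZl (op' _ hpl).
by rewrite (qo _ hpl) mulr0 subrr.
Qed.

Lemma best_affine n (c : 'I_n -> V) (a v : V) :
  exists x, affine a (span_of c) x /\ orth ip (span_of c) (v - x) /\
    `|v - x| <= dist v (affine a (span_of c)).
Proof.
have [p [sp op]] := proj_ex c (v - a).
have o : orth ip (span_of c) (v - (a + p)) by rewrite opprD addrA.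
exists (a + p); split; first by exists p.
split=> //; apply: dist_ge; first by exists (a + p), p.
move=> _ [z sz <-].
have -> : v - (a + z) = (v - (a + p)) + (p - z) by rewrite !opprD !addrA subrK.
rewrite -ler_sqr ?nnegrE ?normr_ge0 // [X in _ <= X]pyth.
  by rewrite lerDl sqr_ge0.
by apply: o; apply: spanB.
Qed.

Lemma self_orth0 (E : set V) x : E x -> orth ip E x -> x = 0.
Proof. by move=> Ex ox; apply: ip_self0; apply: ox. Qed.

(* The
   orthogonality relations give <pf,-ph> = <fp,hp> = |ph|^2, and Cauchy-
   Schwarz turns |fp + hp| <= mu |f| into pbdw_real_ineq. *)
Lemma split_error_bound (E : set V) (pf fp ph hp : V) (mu : R) :
  E pf -> E ph -> orth ip E fp -> orth ip E hp -> 1 <= mu ->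
  ip (pf + ph) (ph + hp) = 0 -> ip (pf + fp) (ph + hp) = 0 ->
  `|ph + hp| <= mu * `|ph| ->
  `|fp + hp| <= mu * `|pf + fp|.
Proof.
move=> Epf Eph ofp ohp mu1 gh fh hmu.
have o1 : ip pf hp = 0 by rewrite ipC; apply: ohp.
have o2 : ip ph hp = 0 by rewrite ipC; apply: ohp.
have o3 : ip fp ph = 0 by apply: ofp.
have o4 : ip pf fp = 0 by rewrite ipC; apply: ofp.
have pfph : ip pf (- ph) = `|ph| ^+ 2.
  move: gh; rewrite ipNr ipN !ipDl !ipDr o1 o2; lra.
have fphp : ip fp hp = `|ph| ^+ 2.
  move: fh; rewrite !ipDl !ipDr o1 o3.
  by rewrite -[ip pf ph]opprK -ipNr pfph; lra.
rewrite -ler_sqr ?nnegrE ?mulr_ge0 ?normr_ge0 //; last lra.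
rewrite normD2 fphp exprMn (pyth o4).
apply: pbdw_real_ineq; rewrite ?normr_ge0 //.
- by rewrite -pfph; have := ipCS pf (- ph); rewrite normrN.
- by rewrite -fphp ipCS.
- by rewrite -(pyth o2) ler_sqr ?nnegrE ?mulr_ge0 ?normr_ge0 //; lra.
Qed.

Section PBDW.
Variables (m : nat) (bW : 'I_m -> V) (P : V -> V).
Hypothesis hP : forall v, span_of bW (P v) /\ orth ip (span_of bW) (v - P v).
Local Notation W := (span_of bW).

Lemma proj_pyth v : `|v| ^+ 2 = `|P v| ^+ 2 + `|v - P v| ^+ 2.
Proof.
rewrite -{1}(subrKC (P v) v) pyth //.
by rewrite ipC; apply: (proj2 (hP v)); apply: (proj1 (hP v)).
Qed.

Lemma proj_le v : `|P v| <= `|v|.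
Proof. by rewrite -ler_sqr ?nnegrE // [X in _ <= X]proj_pyth lerDl sqr_ge0. Qed.

Lemma norm_le_proj_in_W g : `|g| <= `|P g| -> W g.
Proof.
move=> gle; have g2 : `|g| ^+ 2 <= `|P g| ^+ 2 by rewrite ler_sqr ?nnegrE.
have : `|g - P g| ^+ 2 == 0.
  by rewrite eq_le sqr_ge0 andbT; have := proj_pyth g; lra.
by rewrite sqrf_eq0 normr_eq0 subr_eq0 => /eqP ->; apply: (proj1 (hP g)).
Qed.

(* If us minimizes the distance to S over w + W^perp and vs is a nearest
   point of S to us, then us - vs lies in W: otherwise replacing the
   W^perp-component of us - vs by 0 would bring us closer to S. *)
Lemma minimizer_gap_in_W (S : set V) (w us vs : V) :
  S vs -> `|us - vs| <= dist us S -> affine w (orth ip W) us ->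
  (forall v, affine w (orth ip W) v -> dist us S <= dist v S) ->
  W (us - vs).
Proof.
move=> Svs near [t ot usE] hmin; apply: norm_le_proj_in_W.
set g := us - vs.
have av : affine w (orth ip W) (vs + P g).
  exists (t - (g - P g)); first by apply: orthB => //; apply: (proj2 (hP g)).
  by rewrite addrA usE opprB addrCA /g subKr addrC.
apply: le_trans near (le_trans (hmin _ av) _).
by have := dist_le (vs + P g) Svs; rewrite addrAC subrr add0r.
Qed.

Lemma affine_error_orth u us : affine (P u) (orth ip W) us -> orth ip W (u - us).
Proof.
case=> t ot <-; rewrite opprD addrA.
by apply: orthB => //; apply: (proj2 (hP u)).
Qed.

(* PBDW error identity: if g in W and e = f + h - g is orthogonal to W, then
   g and e are the W- and W^perp-parts of f + h. *)
Lemma error_decomposition (f h g e : V) (mu : R) :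
  1 <= mu -> `|h| <= mu * `|P h| ->
  W g -> orth ip W e -> e = f + h - g -> ip g h = 0 -> ip f h = 0 ->
  `|e| <= mu * `|f|.
Proof.
move=> mu1 hmu Wg oe eE gh fh.
have [Wf ofp] := hP f; have [Wh ohp] := hP h.
have fE : f = P f + (f - P f) by rewrite subrKC.
have hE : h = P h + (h - P h) by rewrite subrKC.
have gE : g = P f + P h.
  apply/eqP; rewrite -subr_eq0; apply/eqP; apply: (self_orth0 (E := W)).
    by apply: spanB => //; apply: spanD.
  have -> : g - (P f + P h) = (f - P f) + (h - P h) - e.
    by rewrite -[g](subKr (f + h)) -eE addrAC opprD addrACA.
  by apply: orthB => //; apply: orthD.
have -> : e = (f - P f) + (h - P h) by rewrite eE gE opprD addrACA.
rewrite [X in _ <= _ * `|X|]fE.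
by apply: (split_error_bound Wf Wh ofp ohp mu1); rewrite -?fE -hE -?gE.
Qed.

(* With x, vs the best approximations of u, us in V_k, apply
   error_decomposition to f = u - x, h = x - vs, g = us - vs. *)
Lemma pbdw_error n (c : 'I_n -> V) (ub u us : V) (mu eps : R) :
  1 <= mu -> (forall z, span_of c z -> `|z| <= mu * `|P z|) ->
  dist u (affine ub (span_of c)) <= eps ->
  affine (P u) (orth ip W) us ->
  (forall v, affine (P u) (orth ip W) v ->
     dist us (affine ub (span_of c)) <= dist v (affine ub (span_of c))) ->
  `|u - us| <= mu * eps.
Proof.
move=> mu1 hmu hu aus hmin.
have [x [[px spx xE] [ox dx]]] := best_affine c ub u.
have [vs [[pv spv vE] [ov dv]]] := best_affine c ub us.
have Vh : span_of c (x - vs).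
  by rewrite -xE -vE opprD addrACA subrr add0r; apply: spanB.
have Wg : W (us - vs).
  by apply: (minimizer_gap_in_W _ dv aus hmin); exists pv.
have oe := affine_error_orth aus.
apply: le_trans (_ : mu * `|u - x| <= _); last by rewrite ler_wpM2l ?(le_trans dx hu) //; lra.
apply: (error_decomposition mu1 (hmu _ Vh) Wg oe).
- by rewrite addrA subrK opprB addrA subrK.
- exact: ov.
- exact: ox.
Qed.

Lemma admissible_constant (E : set V) (eps sigma : R) :
  (muEW P E < +oo)%E -> (muEW P E * eps%:E <= sigma%:E)%E -> 0 <= eps ->
  exists mu, [/\ 1 <= mu, forall z, E z -> `|z| <= mu * `|P z| & mu * eps <= sigma].
Proof.
rewrite /muEW; case: asboolP => [sub|nsub] hfin hle he.
  exists 1; split => // z Ez.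
  by rewrite (sub z Ez) normr0 mul1r normr_ge0.
have [v0 [Ev0 nv0]] : exists v, E v /\ v != 0.
  apply: contrapT => hn; apply: nsub => z Ez; apply/eqP/negPn/negP => nz.
  by apply: hn; exists z.
set S := ereal_sup _ in hfin hle.
have ub v : E v -> v != 0 ->
    ((if P v == 0%R then +oo else (`|v| / `|P v|)%:E) <= S)%E.
  by move=> Ev nv; apply: ereal_sup_ubound; exists v.
have Pn0 v : E v -> v != 0 -> P v != 0.
  move=> Ev nv; apply/negP => /eqP P0; have := ub v Ev nv.
  by rewrite P0 eqxx leye_eq => /eqP Sinf; rewrite Sinf ltxx in hfin.
have S0 := ub v0 Ev0 nv0; rewrite (negbTE (Pn0 v0 Ev0 nv0)) in S0.
have Pv0 : 0 < `|P v0| by rewrite normr_gt0 Pn0.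
have one : 1 <= `|v0| / `|P v0| by rewrite ler_pdivlMr // mul1r proj_le.
have Sfin : S \is a fin_num.
  rewrite fin_numE; apply/andP; split; last by rewrite lt_eqF.
  by apply/negP => /eqP Sm; rewrite Sm leeNy_eq in S0.
have S1 : 1 <= fine S by rewrite -lee_fin fineK // (le_trans _ S0) ?lee_fin.
exists (fine S); split => //; last by rewrite -lee_fin EFinM fineK.
move=> z Ez; have [->|nz] := eqVneq z 0; first by rewrite normr0 mulr_ge0 ?normr_ge0 //; lra.
have := ub z Ez nz; rewrite (negbTE (Pn0 z Ez nz)) -(fineK Sfin) lee_fin.
by rewrite ler_pdivrMr // normr_gt0 Pn0.
Qed.

Lemma pbdw_admissible_error n (ub u : V) (Vb : set V) (ustar : V -> V)
    (eps sigma : R) :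
  subspace_of_dim Vb n -> (muEW P Vb < +oo)%E ->
  (muEW P Vb * eps%:E <= sigma%:E)%E ->
  dist u (affine ub Vb) <= eps -> pbdw_estimator ip W (affine ub Vb) ustar ->
  `|u - ustar (P u)| <= sigma.
Proof.
move=> [c [_ ->]] hfin hle hu hest.
have eps0 : 0 <= eps.
  by apply: le_trans hu; apply: dist_ge0; exists (ub + 0), 0 => //; apply: span0.
have [mu [mu1 hmu mueps]] := admissible_constant hfin hle eps0.
have [aus hmin] := hest _ (proj1 (hP u)).
exact: le_trans (pbdw_error mu1 hmu hu aus hmin) mueps.
Qed.
End PBDW.
End Hilbert.

Section Residual.
Variables (R : realType) (V Z : normedModType R) (d : nat) (Y : set 'rV[R]_d).
Variables (A : 'rV[R]_d -> {linear V -> Z}) (Ainv : 'rV[R]_d -> Z -> V).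
Variables (f : 'rV[R]_d -> Z) (r Rb : R).
Hypothesis hAinv : forall y, Y y -> cancel (A y) (Ainv y) /\ cancel (Ainv y) (A y).
Hypothesis hAb : forall y, Y y -> forall v, `|A y v| <= Rb * `|v|.
Hypothesis hAinvb : forall y, Y y -> forall z, `|Ainv y z| <= r^-1 * `|z|.
Hypotheses (hr : 0 < r) (hrR : r <= Rb).
Local Notation res := (resid (fun y => (A y : V -> Z)) f).
Local Notation surr := (surrogate Y (fun y => (A y : V -> Z)) f).
Local Notation sol y := (Ainv y (f y)).

(* the residual is equivalent to the error: v - u(y) = A(y)^-1 (A(y) v - f(y)) *)
Lemma resid_lower v y : Y y -> `|v - sol y| <= r^-1 * res v y.
Proof.
move=> Yy; have [AK AinvK] := hAinv Yy.
have -> : v - sol y = Ainv y (A y v - f y).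
  by rewrite -{2}(AinvK (f y)) -linearB AK.
exact: hAinvb.
Qed.

(* and A(y) (v - u(y)) = A(y) v - f(y) *)
Lemma resid_upper v y : Y y -> res v y <= Rb * `|v - sol y|.
Proof.
move=> Yy; have [_ AinvK] := hAinv Yy.
by rewrite /resid -{1}(AinvK (f y)) -linearB; apply: hAb.
Qed.

Lemma surrogate_le v y : Y y -> surr v <= res v y.
Proof.
move=> Yy; apply: ge_inf; last by exists y.
by exists 0 => _ [y' _ <-]; apply: normr_ge0.
Qed.

(* Error of the selected estimate us against the selected parameter ys:
   us beats the estimate us0 in the surrogate, and ys minimizes the
   residual of us, so both bounds follow from resid_lower/resid_upper. *)
Lemma selected_error (y ys : 'rV[R]_d) (us us0 : V) (s : R) :
  Y y -> Y ys -> `|sol y - us0| <= s -> surr us <= surr us0 ->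
  (forall y', Y y' -> res us ys <= res us y') ->
  `|us - sol ys| <= Rb / r * s /\ `|us - sol ys| <= Rb / r * `|sol y - us|.
Proof.
move=> Yy Yys err0 better ysmin.
have scale t : r^-1 * (Rb * t) = Rb / r * t by rewrite mulrCA mulrA.
have Rb0 : 0 <= Rb := le_trans (ltW hr) hrR.
have attained : res us ys <= surr us.
  by apply: lb_le_inf; [exists (res us y), y | move=> _ [y' Yy' <-]; apply: ysmin].
have lower := resid_lower us Yys.
split; apply: (le_trans lower); rewrite -scale ler_pM2l ?invr_gt0 //.
  apply: le_trans attained (le_trans better (le_trans (surrogate_le us0 Yy) _)).
  by apply: le_trans (resid_upper us0 Yy) _; rewrite distrC ler_wpM2l.
by apply: le_trans (ysmin _ Yy) _; rewrite distrC; apply: resid_upper.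
Qed.
End Residual.

Section Conclusion.
Variables (R : realType) (V : normedModType R) (ip : V -> V -> R) (W M : set V).

Lemma delta_lb (u us u' : V) (s : R) :
  M u -> M u' -> orth ip W (u - us) -> `|us - u'| <= s ->
  ((`|u - us|)%:E <= delta ip W M s)%E.
Proof.
move=> Mu Mu' oe close; apply: ereal_sup_ubound; exists u, us; split => //.
- apply: le_trans (dist_le u Mu) _.
  by rewrite subrr normr0; apply: le_trans close.
- exact: le_trans (dist_le us Mu') close.
Qed.

Lemma delta_le_muMW (e s : R) :
  0 < s -> 0 <= e -> (muMW ip W M < +oo)%E -> (e%:E <= delta ip W M s)%E ->
  exists mu, muMW ip W M = mu%:E /\ e <= 2 * mu * s.
Proof.
move=> s0 e0 hfin De; rewrite /muMW in hfin *.
set S := ereal_sup _ in hfin *.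
have DS : ((e / s)%:E <= S)%E.
  apply: le_trans (_ : (delta ip W M s * (s^-1)%:E <= S)%E); last first.
    by apply: ereal_sup_ubound; exists s.
  by rewrite EFinM lee_wpmul2r // lee_fin invr_ge0 ltW.
have Sfin : S \is a fin_num.
  rewrite fin_numE; apply/andP; split.
    by apply/negP => /eqP Sm; move: DS; rewrite Sm leeNy_eq.
  apply/negP => /eqP Sp; move: hfin; rewrite Sp.
  by rewrite mulry gtr0_sg ?invr_gt0 // mul1e ltxx.
exists (2^-1 * fine S); split; first by rewrite -(fineK Sfin).
move: DS; rewrite -(fineK Sfin) lee_fin ler_pdivrMr // mulrA divff ?mul1r //.
Qed.

Lemma triangle_bounds (u u' us : V) (kappa s : R) :
  0 <= kappa -> M u -> M u' -> orth ip W (u - us) ->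
  `|us - u'| <= kappa * s -> `|us - u'| <= kappa * `|u - us| ->
  ((`|u - u'|)%:E <= (1 + kappa)%:E * delta ip W M (kappa * s))%E /\
  (delta ip W M 0 = 0%E -> (muMW ip W M < +oo)%E ->
   ((`|u - u'|)%:E <= (2%:E * muMW ip W M + 1) * (kappa * s)%:E)%E).
Proof.
move=> kappa0 Mu Mu' oe close1 close2.
have De := delta_lb Mu Mu' oe close1.
have tri : `|u - u'| <= `|u - us| + `|us - u'|.
  by have := ler_normD (u - us) (us - u'); rewrite addrA subrK.
split.
  apply: le_trans (_ : ((1 + kappa) * `|u - us|)%:E <= _)%E.
    by rewrite lee_fin; lra.
  by rewrite EFinM lee_wpmul2l // lee_fin; lra.
move=> D0 hfin.
have := le_trans (normr_ge0 _) close1; rewrite le0r => /orP[/eqP s0|spos].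
  by move: De close1; rewrite s0 mule0 D0 !lee_fin; lra.
have [mu [-> bound]] := delta_le_muMW spos (normr_ge0 _) hfin De.
by rewrite -EFinM lee_fin; lra.
Qed.
End Conclusion.

Theorem mainTheorem7 (R : realType) (V Z : completeNormedModType R)
  (ipV : V -> V -> R) (ipZ : Z -> Z -> R)
  (hipV : inner_product ipV) (hipZ : inner_product ipZ)
  (d : nat) (Y : set 'rV[R]_d) (hY : compact Y)
  (A : 'rV[R]_d -> {linear V -> Z}) (Ainv : 'rV[R]_d -> Z -> V) (f : 'rV[R]_d -> Z)
  (hAinv : forall y, Y y -> cancel (A y) (Ainv y) /\ cancel (Ainv y) (A y))
  (hAcont : opnorm_continuous_on Y (fun y => (A y : V -> Z)))
  (hfcont : {within Y, continuous f})
  (r Rb : R) (hr : 0 < r) (hrR : r <= Rb)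
  (hAb : forall y, Y y -> forall v, `|A y v| <= Rb * `|v|)
  (hAinvb : forall y, Y y -> forall z, `|Ainv y z| <= r^-1 * `|z|)
  (W : set V) (m : nat) (hW : subspace_of_dim W m)
  (P : V -> V) (hP : forall v, W (P v) /\ orth ipV W (v - P v))
  (K : nat) (Mk : 'I_K -> set V)
  (hM : \bigcup_(k in [set: 'I_K]) Mk k = manifold Y Ainv f)
  (ubar : 'I_K -> V) (Vbar : 'I_K -> set V) (nk : 'I_K -> nat)
  (hVbar : forall k, subspace_of_dim (Vbar k) (nk k) /\ (nk k <= m)%N)
  (eps : 'I_K -> R)
  (heps : forall k u, Mk k u -> dist u (affine (ubar k) (Vbar k)) <= eps k)
  (sigma : R) (hsigma : 0 <= sigma)
  (hadm : forall k, (muEW P (Vbar k) < +oo)%E /\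
                    (muEW P (Vbar k) * (eps k)%:E <= sigma%:E)%E)
  (ustar : 'I_K -> V -> V)
  (hustar : forall k, pbdw_estimator ipV W (affine (ubar k) (Vbar k)) (ustar k))
  (y : 'rV[R]_d) (hy : Y y)
  (kstar : 'I_K)
  (hkstar : forall k,
     surrogate Y (fun y => (A y : V -> Z)) f (ustar kstar (P (Ainv y (f y))))
     <= surrogate Y (fun y => (A y : V -> Z)) f (ustar k (P (Ainv y (f y)))))
  (ystar : 'rV[R]_d) (hystar : Y ystar)
  (hystar_min : forall y', Y y' ->
     resid (fun y => (A y : V -> Z)) f (ustar kstar (P (Ainv y (f y)))) ystar
     <= resid (fun y => (A y : V -> Z)) f (ustar kstar (P (Ainv y (f y)))) y') :
  let kappa := Rb / r in
  let M := manifold Y Ainv f in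
  ((`|Ainv y (f y) - Ainv ystar (f ystar)|)%:E
     <= (1 + kappa)%:E * delta ipV W M (kappa * sigma))%E /\
  (delta ipV W M 0 = 0%E -> (muMW ipV W M < +oo)%E ->
   ((`|Ainv y (f y) - Ainv ystar (f ystar)|)%:E
     <= (2%:E * muMW ipV W M + 1) * (kappa * sigma)%:E)%E).
Proof.
move=> kappa M; have [bW [_ WE]] := hW; subst W.
set u := Ainv y (f y).
have [k _ Mku] : (\bigcup_(k in [set: 'I_K]) Mk k) u by rewrite hM; exists y.
have err_k : `|u - ustar k (P u)| <= sigma.
  have [fin adm] := hadm k.
  exact: (pbdw_admissible_error hipV hP (proj1 (hVbar k)) fin adm (heps _ _ Mku) (hustar k)).
have [sel_s sel_e] := selected_error hAinv hAb hAinvb hr hrR hy hystar err_k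
  (hkstar k) hystar_min.
have oe := affine_error_orth hipV hP (proj1 (hustar kstar _ (proj1 (hP u)))).
apply: triangle_bounds oe sel_s sel_e; last by exists ystar.
- by apply: divr_ge0; [exact: le_trans (ltW hr) hrR|exact: ltW].
- by exists y.
Qed.
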